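(* (Single-Iteration Progress.) For every expression $e$ and type $\tau$ with $\varnothing\vdash e:\tau$, either $e$ is a value, or there exist an expression $e_i$, an evaluation context $\mathcal{E}$, an expression $e_0$, an action $a'$, an expression $e_0'$ and an expression $e'$ such that $e\to_{\$e,\mathsf{step},\mathsf{one},0} e_i$, $e_i=\mathcal{E}[e_0]$ is a decomposition, $(\mathsf{step},0)\vdash\mathcal{E}\Downarrow a'$, $e_0\to e_0'$, and $e'=({\downarrow}\mathcal{E})[e_0']$.
   Context: This concerns the ''filtered stepper calculus''. Syntax: actions $a ::= \mathsf{skip} \mid \mathsf{step}$; gas $g ::= \mathsf{one} \mid \mathsf{all}$; priorities $l \in \mathbb{N}$. Patterns $p ::= x \mid p(p) \mid \lambda x.p \mid p+p \mid \underline{n} \mid \$e \mid \$v$ (the pattern typing rules also admit $\mathrm{fix}\,x.p$). A filter is a triple $f=(p,a,g)$. Expressions $e ::= x \mid e(e) \mid \lambda x.e \mid \mathrm{fix}\,x.e \mid e+e \mid \underline{n} \mid \mathrm{filter}_f(e) \mid \langle e\rangle^{a,g,l}$ (the last is called a residue), taken up to $\alpha$-equivalence; $\underline{n}$ ranges over numerals. Evaluation contexts $\mathcal{E} ::= \circ \mid \mathcal{E}(e) \mid e(\mathcal{E}) \mid \mathcal{E}+e \mid e+\mathcal{E} \mid \mathrm{filter}_f(\mathcal{E}) \mid \langle \mathcal{E}\rangle^{a,g,l}$, with exactly one hole; $\mathcal{E}[e]$ is the result of plugging $e$ into the hole. The values are exactly $\lambda x.e$ and numerals $\underline{n}$ (fixpoints,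 filters and residues are never values). Substitution $[v/x]e$ is standard capture-avoiding substitution, which passes through residues unchanged, through filters (substituting also into the filter's pattern), and stops at binders $\lambda x$ and $\mathrm{fix}\,x$ of the same variable. Stripping $|e|$ erases all filter and residue wrappers recursively. Matching $p \triangleright e$ is defined inductively: $\$e \triangleright e$ for all $e$; $\$v \triangleright v$ for every value $v$; $\underline{n}\triangleright\underline{n}$; $\lambda x_1.e_1 \triangleright \lambda x_2.e_2$ if $|e_1| \equiv_\alpha |e_2|$; $\mathrm{fix}\,x_1.e_1 \triangleright \mathrm{fix}\,x_2.e_2$ if $|e_1|\equiv_\alpha |e_2|$; $p_1(p_2)\triangleright e_1(e_2)$ if $p_1\triangleright e_1$ and $p_2\triangleright e_2$; $p_1+p_2\triangleright e_1+e_2$ likewise; there are no other rules. Instrumentation $e \to_{p,a,g,l} e'$ is the inductively defined relation: values and variables and $\mathrm{fix}\,x.e$ are left unchanged; $\langle e_0\rangle^{a',g',l'} \to_{p,a,g,l} \langle e\rangle^{a',g',l'}$ if $e_0\to_{p,a,g,l} e$; $\mathrm{filter}_{(p',a',g')}(e_0)\to_{p,a,g,l}\mathrm{filter}_{(p',a',g')}(e')$ if $e_0\to_{p,a,g,l} e$ and $e \to_{p',a',g',l+1} e'$; for $e_1(e_2)$, if $e_1\to_{p,a,g,l} e_1'$ and $e_2\to_{p,a,g,l} e_2'$ then $e_1(e_2)\to_{p,a,g,l}\langle e_1'(e_2')\rangle^{a,g,l}$ when $p\triangleright e_1(e_2)$ and $e_1(e_2)\to_{p,a,g,l} e_1'(e_2')$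 when not; identically for $e_1+e_2$. Decomposition $e = \mathcal{E}[e_0]$ (with $e_0$ a redex) is the non-deterministic relation: $\langle v\rangle^{a,g,l}$ and $\mathrm{filter}_f(v)$ with $v$ a value decompose as hole $\circ$ with redex themselves; if $e$ decomposes as $\mathcal{E}$ and $e_0$ then $\langle e\rangle^{a,g,l}$ decomposes as $\langle\mathcal{E}\rangle^{a,g,l}$ and $e_0$, and $\mathrm{filter}_f(e)$ as $\mathrm{filter}_f(\mathcal{E})$ and $e_0$; $e_1(e_2)$ decomposes as $\mathcal{E}_1(e_2)$ if $e_1$ decomposes as $\mathcal{E}_1$, as $e_1(\mathcal{E}_2)$ if $e_1$ is a value and $e_2$ decomposes as $\mathcal{E}_2$, and as $\circ$ with redex $e_1(e_2)$ if both are values; identically for $e_1+e_2$; $\mathrm{fix}\,x.e$ decomposes as $\circ$ with redex itself. Instruction transitions $e_0 \to e'$: $(\lambda x.e_1)(v)\to [v/x]e_1$ for a value $v$; $\underline{n_1}+\underline{n_2}\to\underline{n_1+n_2}$; $\mathrm{fix}\,x.e\to[\mathrm{fix}\,x.e/x]e$; $\langle v\rangle^{a,g,l}\to v$ and $\mathrm{filter}_f(v)\to v$ for a value $v$. Decay ${\downarrow}\mathcal{E}$ recursively removes every residue with gas $\mathsf{one}$ (replacing $\langle e\rangle^{a,\mathsf{one},l}$ by the decay of $e$), keeps residues with gas $\mathsf{all}$ and filters, applies recursively to all subterms, and maps the hole to the hole. Action selection $(a,l)\vdash\mathcal{E}\Downarrow a'$: $(a,l)\vdash\circ\Downarrow a$;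 for context nodes of the form application, addition or filter, the judgment passes unchanged into the subcontext containing the hole; $(a_0,l_0)\vdash\langle\mathcal{E}\rangle^{a,g,l}\Downarrow a'$ holds if either $l\le l_0$ and $(a_0,l_0)\vdash\mathcal{E}\Downarrow a'$, or $l>l_0$ and $(a,l)\vdash\mathcal{E}\Downarrow a'$. Typing: types $\tau ::= \mathbb{N}\mid \tau\to\tau$. $\Gamma\vdash e:\tau$ is given by the usual Curry-style simply-typed rules: variables from $\Gamma$; $\lambda x.e : \tau_x\to\tau_e$ if $\Gamma,x{:}\tau_x\vdash e:\tau_e$; application; numerals have type $\mathbb{N}$; $e_1+e_2:\mathbb{N}$ if both summands have type $\mathbb{N}$; $\mathrm{fix}\,x.e:\tau$ if $\Gamma,x{:}\tau\vdash e:\tau$; $\mathrm{filter}_{(p,a,g)}(e):\tau_e$ if $\Gamma\vdash p:\tau_p$ for some $\tau_p$ and $\Gamma\vdash e:\tau_e$; $\langle e\rangle^{a,g,l}:\tau$ if $\Gamma\vdash e:\tau$. Pattern typing $\Gamma\vdash p:\tau$: $\$e$ and $\$v$ have every type; variables, $\lambda$, application, numerals, addition and $\mathrm{fix}$ are typed by the analogous rules. $\varnothing$ is the empty context. *)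

(* Filtered stepper calculus, with binders as de Bruijn indices
   (so terms are taken up to alpha-equivalence by construction). *)
From Stdlib Require Import List Arith.
Import ListNotations.

Inductive action := Skip | Step.
Inductive gas := One | All.

(* Expressions and patterns share one syntax: patterns additionally use the
   wildcards PAny ($e) and PVal ($v).  Typing (below) ensures that expressions
   never contain these wildcards outside of filter patterns. *)
Inductive term : Type :=
| Var (n : nat)
| App (t1 t2 : term)
| Lam (t : term)
| Fix (t : term)
| Plus (t1 t2 : term)
| Num (n : nat)
| Filter (p : term) (a : action) (g : gas) (t : term)
| Resid (t : term) (a : action) (g : gas) (l : nat)
| PAny
| PVal.

Inductive ty := TNat | TArrow (t1 t2 : ty).

Definition is_value (t : term) : Prop :=
  match t with Lam _ | Num _ => True | _ => False end.

Fixpoint lift (c : nat) (t : term) : term :=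
  match t with
  | Var n => if c <=? n then Var (S n) else Var n
  | App t1 t2 => App (lift c t1) (lift c t2)
  | Lam t => Lam (lift (S c) t)
  | Fix t => Fix (lift (S c) t)
  | Plus t1 t2 => Plus (lift c t1) (lift c t2)
  | Num n => Num n
  | Filter p a g t => Filter (lift c p) a g (lift c t)
  | Resid t a g l => Resid (lift c t) a g l
  | PAny => PAny
  | PVal => PVal
  end.

Fixpoint subst (k : nat) (v : term) (t : term) : term :=
  match t with
  | Var n => if n =? k then v else if k <? n then Var (pred n) else Var n
  | App t1 t2 => App (subst k v t1) (subst k v t2)
  | Lam t => Lam (subst (S k) (lift 0 v) t)
  | Fix t => Fix (subst (S k) (lift 0 v) t)
  | Plus t1 t2 => Plus (subst k v t1) (subst k v t2)
  | Num n => Num n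
  | Filter p a g t => Filter (subst k v p) a g (subst k v t)
  | Resid t a g l => Resid (subst k v t) a g l
  | PAny => PAny
  | PVal => PVal
  end.

Fixpoint strip (t : term) : term :=
  match t with
  | App t1 t2 => App (strip t1) (strip t2)
  | Lam t => Lam (strip t)
  | Fix t => Fix (strip t)
  | Plus t1 t2 => Plus (strip t1) (strip t2)
  | Filter _ _ _ t => strip t
  | Resid t _ _ _ => strip t
  | t => t
  end.

Inductive matches : term -> term -> Prop :=
| M_any e : matches PAny e
| M_val v : is_value v -> matches PVal v
| M_num n : matches (Num n) (Num n)
| M_lam e1 e2 : strip e1 = strip e2 -> matches (Lam e1) (Lam e2)
| M_fix e1 e2 : strip e1 = strip e2 -> matches (Fix e1) (Fix e2)
| M_app p1 p2 e1 e2 : matches p1 e1 -> matches p2 e2 -> matches (App p1 p2) (App e1 e2)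
| M_plus p1 p2 e1 e2 : matches p1 e1 -> matches p2 e2 -> matches (Plus p1 p2) (Plus e1 e2).

Inductive instr (p : term) (a : action) (g : gas) (l : nat) : term -> term -> Prop :=
| I_lam t : instr p a g l (Lam t) (Lam t)
| I_num n : instr p a g l (Num n) (Num n)
| I_var n : instr p a g l (Var n) (Var n)
| I_fix t : instr p a g l (Fix t) (Fix t)
| I_resid e0 e a' g' l' :
    instr p a g l e0 e -> instr p a g l (Resid e0 a' g' l') (Resid e a' g' l')
| I_filter p' a' g' e0 e e' :
    instr p a g l e0 e -> instr p' a' g' (S l) e e' ->
    instr p a g l (Filter p' a' g' e0) (Filter p' a' g' e')
| I_app_match e1 e2 e1' e2' :
    instr p a g l e1 e1' -> instr p a g l e2 e2' -> matches p (App e1 e2) ->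
    instr p a g l (App e1 e2) (Resid (App e1' e2') a g l)
| I_app_nomatch e1 e2 e1' e2' :
    instr p a g l e1 e1' -> instr p a g l e2 e2' -> ~ matches p (App e1 e2) ->
    instr p a g l (App e1 e2) (App e1' e2')
| I_plus_match e1 e2 e1' e2' :
    instr p a g l e1 e1' -> instr p a g l e2 e2' -> matches p (Plus e1 e2) ->
    instr p a g l (Plus e1 e2) (Resid (Plus e1' e2') a g l)
| I_plus_nomatch e1 e2 e1' e2' :
    instr p a g l e1 e1' -> instr p a g l e2 e2' -> ~ matches p (Plus e1 e2) ->
    instr p a g l (Plus e1 e2) (Plus e1' e2').

Inductive ctx : Type :=
| Hole
| CAppL (E : ctx) (e : term)
| CAppR (e : term) (E : ctx)
| CPlusL (E : ctx) (e : term)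
| CPlusR (e : term) (E : ctx)
| CFilter (p : term) (a : action) (g : gas) (E : ctx)
| CResid (E : ctx) (a : action) (g : gas) (l : nat).

Fixpoint plug (E : ctx) (e : term) : term :=
  match E with
  | Hole => e
  | CAppL E e2 => App (plug E e) e2
  | CAppR e1 E => App e1 (plug E e)
  | CPlusL E e2 => Plus (plug E e) e2
  | CPlusR e1 E => Plus e1 (plug E e)
  | CFilter p a g E => Filter p a g (plug E e)
  | CResid E a g l => Resid (plug E e) a g l
  end.

Inductive decomp : term -> ctx -> term -> Prop :=
| D_resid_val v a g l : is_value v -> decomp (Resid v a g l) Hole (Resid v a g l)
| D_filter_val p a g v : is_value v -> decomp (Filter p a g v) Hole (Filter p a g v)
| D_resid e E e0 a g l : decomp e E e0 -> decomp (Resid e a g l) (CResid E a g l) e0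
| D_filter p a g e E e0 : decomp e E e0 -> decomp (Filter p a g e) (CFilter p a g E) e0
| D_appL e1 e2 E e0 : decomp e1 E e0 -> decomp (App e1 e2) (CAppL E e2) e0
| D_appR e1 e2 E e0 : is_value e1 -> decomp e2 E e0 -> decomp (App e1 e2) (CAppR e1 E) e0
| D_app e1 e2 : is_value e1 -> is_value e2 -> decomp (App e1 e2) Hole (App e1 e2)
| D_plusL e1 e2 E e0 : decomp e1 E e0 -> decomp (Plus e1 e2) (CPlusL E e2) e0
| D_plusR e1 e2 E e0 : is_value e1 -> decomp e2 E e0 -> decomp (Plus e1 e2) (CPlusR e1 E) e0
| D_plus e1 e2 : is_value e1 -> is_value e2 -> decomp (Plus e1 e2) Hole (Plus e1 e2)
| D_fix e : decomp (Fix e) Hole (Fix e).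

Inductive instr_step : term -> term -> Prop :=
| S_beta e1 v : is_value v -> instr_step (App (Lam e1) v) (subst 0 v e1)
| S_plus n1 n2 : instr_step (Plus (Num n1) (Num n2)) (Num (n1 + n2))
| S_fix e : instr_step (Fix e) (subst 0 (Fix e) e)
| S_resid v a g l : is_value v -> instr_step (Resid v a g l) v
| S_filter p a g v : is_value v -> instr_step (Filter p a g v) v.

Fixpoint decay_term (t : term) : term :=
  match t with
  | App t1 t2 => App (decay_term t1) (decay_term t2)
  | Lam t => Lam (decay_term t)
  | Fix t => Fix (decay_term t)
  | Plus t1 t2 => Plus (decay_term t1) (decay_term t2)
  | Filter p a g t => Filter (decay_term p) a g (decay_term t)
  | Resid t a One l => decay_term t
  | Resid t a All l => Resid (decay_term t) a All l
  | t => t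
  end.

Fixpoint decay (E : ctx) : ctx :=
  match E with
  | Hole => Hole
  | CAppL E e2 => CAppL (decay E) (decay_term e2)
  | CAppR e1 E => CAppR (decay_term e1) (decay E)
  | CPlusL E e2 => CPlusL (decay E) (decay_term e2)
  | CPlusR e1 E => CPlusR (decay_term e1) (decay E)
  | CFilter p a g E => CFilter (decay_term p) a g (decay E)
  | CResid E a One l => decay E
  | CResid E a All l => CResid (decay E) a All l
  end.

Inductive select : action -> nat -> ctx -> action -> Prop :=
| Sel_hole a l : select a l Hole a
| Sel_appL a l E e a' : select a l E a' -> select a l (CAppL E e) a'
| Sel_appR a l e E a' : select a l E a' -> select a l (CAppR e E) a'
| Sel_plusL a l E e a' : select a l E a' -> select a l (CPlusL E e) a'
| Sel_plusR a l e E a' : select a l E a' -> select a l (CPlusR e E) a'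
| Sel_filter a l p af gf E a' : select a l E a' -> select a l (CFilter p af gf E) a'
| Sel_resid_le a0 l0 E a g l a' :
    l <= l0 -> select a0 l0 E a' -> select a0 l0 (CResid E a g l) a'
| Sel_resid_gt a0 l0 E a g l a' :
    l > l0 -> select a l E a' -> select a0 l0 (CResid E a g l) a'.

Inductive pat_type : list ty -> term -> ty -> Prop :=
| PT_any G T : pat_type G PAny T
| PT_val G T : pat_type G PVal T
| PT_var G n T : nth_error G n = Some T -> pat_type G (Var n) T
| PT_lam G p T1 T2 : pat_type (T1 :: G) p T2 -> pat_type G (Lam p) (TArrow T1 T2)
| PT_app G p1 p2 T1 T2 :
    pat_type G p1 (TArrow T1 T2) -> pat_type G p2 T1 -> pat_type G (App p1 p2) T2
| PT_num G n : pat_type G (Num n) TNat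
| PT_plus G p1 p2 : pat_type G p1 TNat -> pat_type G p2 TNat -> pat_type G (Plus p1 p2) TNat
| PT_fix G p T : pat_type (T :: G) p T -> pat_type G (Fix p) T.

Inductive has_type : list ty -> term -> ty -> Prop :=
| T_var G n T : nth_error G n = Some T -> has_type G (Var n) T
| T_lam G e T1 T2 : has_type (T1 :: G) e T2 -> has_type G (Lam e) (TArrow T1 T2)
| T_app G e1 e2 T1 T2 :
    has_type G e1 (TArrow T1 T2) -> has_type G e2 T1 -> has_type G (App e1 e2) T2
| T_num G n : has_type G (Num n) TNat
| T_plus G e1 e2 : has_type G e1 TNat -> has_type G e2 TNat -> has_type G (Plus e1 e2) TNat
| T_fix G e T : has_type (T :: G) e T -> has_type G (Fix e) T
| T_filter G p a g e Tp Te :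
    pat_type G p Tp -> has_type G e Te -> has_type G (Filter p a g e) Te
| T_resid G e a g l T : has_type G e T -> has_type G (Resid e a g l) T.

(* Instrumentation only wraps subterms in residues, so it is total on
   well-typed terms and preserves their types; a residue or filter around a
   value is itself a redex.  Ordinary progress for the instrumented term
   therefore yields a decomposition into a context and a steppable redex, and
   since action selection is total and decay is a function, the rest of the
   iteration always goes through. *)

From Stdlib Require Import List Lia Classical.

Fixpoint size_unresid (t : term) : nat :=
  match t with
  | App t1 t2 | Plus t1 t2 => S (size_unresid t1 + size_unresid t2)
  | Filter _ _ _ t => S (size_unresid t)
  | Resid t _ _ _ => size_unresid t
  | _ => 1
  end.

Lemma instr_size_unresid p a g l e e' :
  instr p a g l e e' -> size_unresid e' = size_unresid e.
Proof. induction 1; simpl; lia. Qed.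

Lemma instr_has_type p a g l e e' :
  instr p a g l e e' -> forall G T, has_type G e T -> has_type G e' T.
Proof. induction 1; intros G T HT; inversion HT; subst; eauto using has_type. Qed.

Lemma instr_value_inv p a g l e e' : instr p a g l e e' -> is_value e' -> is_value e.
Proof. destruct 1; simpl; auto. Qed.

Lemma instr_exists G e T :
  has_type G e T -> forall p a g l, exists e', instr p a g l e e'.
Proof.
  remember (S (size_unresid e)) as n eqn:Hn.
  assert (Hsize : size_unresid e < n) by lia; clear Hn.
  revert G e T Hsize.
  induction n as [|n IHsize]; [lia|].
  intros G e; revert G.
  induction e as [m|e1 IH1 e2 IH2|b _|b _|e1 IH1 e2 IH2|m|q _ af gf b IHb|b IHb ar gr lr| |];
    intros G T Hsize Ht p a g l; inversion Ht; subst; simpl in Hsize.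
  - eexists; constructor.
  - destruct (IH1 _ _ ltac:(lia) ltac:(eassumption) p a g l) as [e1' Hi1].
    destruct (IH2 _ _ ltac:(lia) ltac:(eassumption) p a g l) as [e2' Hi2].
    destruct (classic (matches p (App e1 e2))).
    + eexists; eapply I_app_match; eauto.
    + eexists; eapply I_app_nomatch; eauto.
  - eexists; constructor.
  - eexists; constructor.
  - destruct (IH1 _ _ ltac:(lia) ltac:(eassumption) p a g l) as [e1' Hi1].
    destruct (IH2 _ _ ltac:(lia) ltac:(eassumption) p a g l) as [e2' Hi2].
    destruct (classic (matches p (Plus e1 e2))).
    + eexists; eapply I_plus_match; eauto.
    + eexists; eapply I_plus_nomatch; eauto.
  - eexists; constructor.
  - destruct (IHb _ _ ltac:(lia) ltac:(eassumption) p a g l) as [b1 Hb1].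
    (* The filter's own pass runs on [b1], which is no longer a subterm;
       it is, however, as small as [b] once residues are ignored. *)
    pose proof (instr_size_unresid _ _ _ _ _ _ Hb1) as Hb1_size.
    pose proof (instr_has_type _ _ _ _ _ _ Hb1 _ _ ltac:(eassumption)) as Hb1_type.
    destruct (IHsize _ b1 _ ltac:(lia) Hb1_type q af gf (S l)) as [b2 Hb2].
    eexists; eapply I_filter; eauto.
  - destruct (IHb _ _ ltac:(lia) ltac:(eassumption) p a g l) as [b1 Hb1].
    eexists; eapply I_resid; eauto.
Qed.

Lemma decomp_plug e E e0 : decomp e E e0 -> e = plug E e0.
Proof. induction 1; simpl; subst; auto. Qed.

Lemma select_exists E a l : exists a', select a l E a'.
Proof.
  revert a l; induction E as [| E IHE | ? E IHE | E IHE | ? E IHE | p af gf E IHE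
                              | E IHE ar gr lr]; intros a l.
  - eexists; constructor.
  - destruct (IHE a l) as [a' Hsel]; eexists; constructor; eauto.
  - destruct (IHE a l) as [a' Hsel]; eexists; constructor; eauto.
  - destruct (IHE a l) as [a' Hsel]; eexists; constructor; eauto.
  - destruct (IHE a l) as [a' Hsel]; eexists; constructor; eauto.
  - destruct (IHE a l) as [a' Hsel]; eexists; constructor; eauto.
  - destruct (Compare_dec.le_gt_dec lr l) as [Hle | Hgt].
    + destruct (IHE a l) as [a' Hsel]; eexists; eapply Sel_resid_le; eauto.
    + destruct (IHE ar lr) as [a' Hsel]; eexists; eapply Sel_resid_gt; eauto.
Qed.

Lemma canonical_arrow G v T1 T2 :
  has_type G v (TArrow T1 T2) -> is_value v -> exists b, v = Lam b.
Proof. intros Ht Hv; destruct v; simpl in Hv; try contradiction; inversion Ht; eauto. Qed.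

Lemma canonical_nat G v : has_type G v TNat -> is_value v -> exists n, v = Num n.
Proof. intros Ht Hv; destruct v; simpl in Hv; try contradiction; inversion Ht; eauto. Qed.

Lemma progress e T :
  has_type nil e T ->
  is_value e \/ exists E e0 e0', decomp e E e0 /\ instr_step e0 e0'.
Proof.
  remember nil as G eqn:HG; induction 1; subst.
  - destruct n; discriminate.
  - left; exact I.
  - right; destruct IHhas_type1 as [V1 | (E & e0 & e0' & HD & HS)]; [reflexivity | |].
    + destruct (canonical_arrow _ _ _ _ H V1) as [b ->].
      destruct IHhas_type2 as [V2 | (E & e0 & e0' & HD & HS)]; [reflexivity | |].
      * do 3 eexists; split; [apply D_app | apply S_beta]; simpl; auto.
      * do 3 eexists; split; [apply D_appR | ]; simpl; eauto.
    + do 3 eexists; split; [apply D_appL | ]; eauto.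
  - left; exact I.
  - right; destruct IHhas_type1 as [V1 | (E & e0 & e0' & HD & HS)]; [reflexivity | |].
    + destruct (canonical_nat _ _ H V1) as [n1 ->].
      destruct IHhas_type2 as [V2 | (E & e0 & e0' & HD & HS)]; [reflexivity | |].
      * destruct (canonical_nat _ _ H0 V2) as [n2 ->].
        do 3 eexists; split; [apply D_plus | apply S_plus]; simpl; auto.
      * do 3 eexists; split; [apply D_plusR | ]; simpl; eauto.
    + do 3 eexists; split; [apply D_plusL | ]; eauto.
  - right; do 3 eexists; split; [apply D_fix | apply S_fix].
  - right; destruct IHhas_type as [V | (E & e0 & e0' & HD & HS)]; [reflexivity | |].
    + do 3 eexists; split; [apply D_filter_val | apply S_filter]; auto.
    + do 3 eexists; split; [apply D_filter | ]; eauto.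
  - right; destruct IHhas_type as [V | (E & e0 & e0' & HD & HS)]; [reflexivity | |].
    + do 3 eexists; split; [apply D_resid_val | apply S_resid]; auto.
    + do 3 eexists; split; [apply D_resid | ]; eauto.
Qed.

Theorem theorem3 :
  forall (e : term) (T : ty),
    has_type nil e T ->
    is_value e \/
    exists (ei : term) (E : ctx) (e0 : term) (a' : action) (e0' e' : term),
      instr PAny Step One 0 e ei /\
      ei = plug E e0 /\ decomp ei E e0 /\
      select Step 0 E a' /\
      instr_step e0 e0' /\
      e' = plug (decay E) e0'.
Proof.
  intros e T Ht.
  destruct (instr_exists _ _ _ Ht PAny Step One 0) as [ei Hinstr].
  destruct (progress ei T (instr_has_type _ _ _ _ _ _ Hinstr _ _ Ht))
    as [Hval | (E & e0 & e0' & Hdecomp & Hstep)].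
  - left; exact (instr_value_inv _ _ _ _ _ _ Hinstr Hval).
  - right; destruct (select_exists E Step 0) as [a' Hsel].
    exists ei, E, e0, a', e0', (plug (decay E) e0').
    repeat split; auto using decomp_plug.
Qed.
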